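(* Let $f:2^V\to\mathbb{Z}_{\ge0}$ be a connectivity function and $C,W\subseteq V$. If $W$ disorients $C$ and $f(C)<f(W)/2$, then $(C, V\setminus C, \emptyset)$ is a $W$-improvement.
   Context: A connectivity function $f:2^V\to\mathbb{Z}_{\ge0}$ ($V$ finite) satisfies $f(\emptyset)=0$, $f(X)=f(V\setminus X)$, and $f(X\cup Y)+f(X\cap Y)\le f(X)+f(Y)$. Write $\overline{X}=V\setminus X$. The set $W$ directly orients $C$ if $f(C\cap W)<f(\overline{C}\cap W)$ and $f(C\cap\overline{W})<f(\overline{C}\cap\overline{W})$; $W$ inversely orients $C$ if it directly orients $\overline{C}$; $W$ disorients $C$ if it neither directly nor inversely orients $C$. For $W\subseteq V$, a $W$-improvement is a tripartition $(C_1,C_2,C_3)$ of $V$ (pairwise disjoint, possibly empty, union $V$) with $f(C_i)<f(W)/2$, $f(C_i\cap W)<f(W)$, $f(C_i\cap\overline{W})<f(W)$ for each $i$. *)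

From mathcomp Require Import all_boot.
Set Implicit Arguments. Unset Strict Implicit. Unset Printing Implicit Defensive.

Definition connectivity_function (V : finType) (f : {set V} -> nat) : Prop :=
  [/\ f set0 = 0,
      (forall X : {set V}, f X = f (~: X)) &
      (forall X Y : {set V}, f (X :|: Y) + f (X :&: Y) <= f X + f Y)].

Definition directly_orients (V : finType) (f : {set V} -> nat) (W C : {set V}) : Prop :=
  f (C :&: W) < f (~: C :&: W) /\ f (C :&: ~: W) < f (~: C :&: ~: W).

Definition inversely_orients (V : finType) (f : {set V} -> nat) (W C : {set V}) : Prop :=
  directly_orients f W (~: C).

Definition disorients (V : finType) (f : {set V} -> nat) (W C : {set V}) : Prop :=
  ~ directly_orients f W C /\ ~ inversely_orients f W C.

Definition tripartition (V : finType) (C1 C2 C3 : {set V}) : Prop :=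
  [/\ [disjoint C1 & C2], [disjoint C1 & C3], [disjoint C2 & C3]
    & C1 :|: C2 :|: C3 = setT].

(* f(X) < f(W)/2 is stated as 2 * f(X) < f(W) (exact over the rationals). *)
Definition W_improvement (V : finType) (f : {set V} -> nat) (W C1 C2 C3 : {set V}) : Prop :=
  tripartition C1 C2 C3 /\
  forall Ci, Ci \in [:: C1; C2; C3] ->
    [/\ 2 * f Ci < f W, f (Ci :&: W) < f W & f (Ci :&: ~: W) < f W].

From mathcomp Require Import all_boot.
From mathcomp Require Import zify.

Set Implicit Arguments.
Unset Strict Implicit.
Unset Printing Implicit Defensive.

(** Write a, b, c, d for the values of f on C∩W, C̄∩W, C∩W̄, C̄∩W̄.
    Submodularity and symmetry give a + d <= f C + f W and b + c <= f C + f W,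
    and subadditivity gives f W <= c + d.  If a >= f W, then d <= f C < f W / 2,
    hence c > d, and b <= f C + f W - c <= 2 f C < f W <= a: so W inversely
    orients C.  Exchanging W with its complement, and C with its complement,
    shows that a disoriented C and its complement meet W and W̄ in sets of value
    below f W. *)

Section ConnectivityFunction.

Variables (V : finType) (f : {set V} -> nat).
Hypothesis f_conn : connectivity_function f.

Lemma connf0 : f set0 = 0.
Proof. by case: f_conn. Qed.

Lemma connfC (X : {set V}) : f (~: X) = f X.
Proof. by case: f_conn => _ fC _; rewrite fC setCK. Qed.

Lemma connf_submod (X Y : {set V}) : f (X :|: Y) + f (X :&: Y) <= f X + f Y.
Proof. by case: f_conn. Qed.

Lemma connf_subadd (X Y : {set V}) : f (X :|: Y) <= f X + f Y.
Proof. by apply: leq_trans (connf_submod X Y); apply: leq_addr. Qed.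

Lemma connf_posimod (X Y : {set V}) : f (X :&: Y) + f (~: X :&: ~: Y) <= f X + f Y.
Proof. by rewrite -setCU connfC addnC; apply: connf_submod. Qed.

Lemma connf_split (X Y : {set V}) : f Y <= f (X :&: Y) + f (~: X :&: Y).
Proof. by rewrite -{1}(setTI Y) -(setUCr X) setIUl; apply: connf_subadd. Qed.

Lemma inversely_orients_setCl (W C : {set V}) :
  inversely_orients f (~: W) C <-> inversely_orients f W C.
Proof. by rewrite /inversely_orients /directly_orients !setCK; split=> -[? ?]; split. Qed.

Lemma inversely_orients_of_meet (W C : {set V}) :
  2 * f C < f W -> f W <= f (C :&: W) -> inversely_orients f W C.
Proof.
move=> hCW hW; rewrite /inversely_orients /directly_orients setCK.
have ad := connf_posimod C W.
have := connf_posimod C (~: W); rewrite setCK connfC => cb.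
have := connf_split C (~: W); rewrite connfC => cd.
split; lia.
Qed.

Lemma meets_lt_of_not_inversely_orients (W C : {set V}) :
  2 * f C < f W -> ~ inversely_orients f W C ->
  f (C :&: W) < f W /\ f (C :&: ~: W) < f W.
Proof.
move=> hCW ninv; split; rewrite ltnNge; apply/negP => hW; apply: ninv.
  exact: inversely_orients_of_meet.
by apply/inversely_orients_setCl; apply: inversely_orients_of_meet; rewrite connfC.
Qed.

End ConnectivityFunction.

Lemma tripartition_setC (V : finType) (C : {set V}) : tripartition C (~: C) set0.
Proof.
split; rewrite -?setI_eq0 ?setICr ?setI0 //.
by rewrite setU0 setUCr.
Qed.

Theorem lemma3 (V : finType) (f : {set V} -> nat) (C W : {set V}) :
  connectivity_function f ->
  disorients f W C ->
  2 * f C < f W ->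
  W_improvement f W C (~: C) set0.
Proof.
move=> f_conn [ndir ninv] hCW.
have hCcW : 2 * f (~: C) < f W by rewrite connfC.
have ninvC : ~ inversely_orients f W (~: C) by rewrite /inversely_orients setCK.
have fW_gt0 : 0 < f W := leq_ltn_trans (leq0n _) hCW.
split; first exact: tripartition_setC.
move=> Ci; rewrite !inE => /or3P [] /eqP ->.
- by have [] := meets_lt_of_not_inversely_orients f_conn hCW ninv.
- by have [] := meets_lt_of_not_inversely_orients f_conn hCcW ninvC.
- by rewrite !set0I connf0.
Qed.
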